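(* Let $E$ be a real affine space of finite dimension, let $\mathcal{P}$ be a Yao-Yao partition of $E$ and let $c$ be its center. Let $\ell$ be an affine form on $E$ such that $\ell(c)=0$. Then there exists $A\in\mathcal{P}$ such that $\ell(x)\geq 0$ for all $x\in A$. Moreover, there is at most one element $A$ of $\mathcal{P}$ such that $\ell(x)>0$ for all $x\in A\setminus\{c\}$.
   Context: For a finite-dimensional real affine space $E$, $\vec{E}$ denotes its associated vector space. A set $\mathcal{P}$ of subsets of $E$ is a partition of $E$ if $\bigcup\mathcal{P}=E$ and the interiors of two distinct elements of $\mathcal{P}$ do not intersect (e.g. $\{(-\infty,a],[a,+\infty)\}$ is a partition of $\mathbb{R}$). Yao-Yao partitions and their centers are defined by induction on the dimension: if $E=\{c\}$ has dimension $0$, then $\mathcal{P}=\{\{c\}\}$ is a Yao-Yao partition of $E$ with center $c$. If $E$ has dimension $n\geq 1$, a set $\mathcal{P}$ is a Yao-Yao partition of $E$ if there exist an affine hyperplane $F$ of $E$, a vector $v\in\vec{E}\setminus\vec{F}$, and two Yao-Yao partitions $\mathcal{P}_+$ and $\mathcal{P}_-$ of $F$ having the same center $c$, such that $\mathcal{P}=\{A+\mathbb{R}_- v : A\in\mathcal{P}_-\}\cup\{A+\mathbb{R}_+ v : A\in\mathcal{P}_+\}$; the center of $\mathcal{P}$ is then $c$. *)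

(* the ambient real affine space E is modelled as R^n = 'rV[R]_n,
   R : realType.  Affine subspaces of E are given by a base point p and a
   direction {vspace 'rV[R]_n}. *)
From HB Require Import structures.
From mathcomp Require Import all_boot all_order all_algebra.
From mathcomp Require Import boolp classical_sets reals.
Set Implicit Arguments. Unset Strict Implicit. Unset Printing Implicit Defensive.
Import Order.TTheory GRing.Theory Num.Theory.
Local Open Scope ring_scope.
Local Open Scope classical_set_scope.

Definition add_nray {R : realType} {n : nat} (A : set 'rV[R]_n) (v : 'rV[R]_n)
  : set 'rV[R]_n := [set x | exists a t, A a /\ t <= 0 /\ x = a + t *: v].
Definition add_pray {R : realType} {n : nat} (A : set 'rV[R]_n) (v : 'rV[R]_n)
  : set 'rV[R]_n := [set x | exists a t, A a /\ 0 <= t /\ x = a + t *: v].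

(* yao U p P c : P is a Yao-Yao partition, with center c, of the affine
   subspace p + U of R^n (by induction on the dimension of U). *)
Inductive yao {R : realType} {n : nat} :
    {vspace 'rV[R]_n} -> 'rV[R]_n -> set (set 'rV[R]_n) -> 'rV[R]_n -> Prop :=
| yao_dim0 (U : {vspace 'rV[R]_n}) (p : 'rV[R]_n) :
    \dim U = 0%N -> yao U p [set [set p]] p
| yao_dimS (U W : {vspace 'rV[R]_n}) (p q v c : 'rV[R]_n)
    (Pm Pp : set (set 'rV[R]_n)) :
    (0 < \dim U)%N ->
    (* F = q + W is an affine hyperplane of E = p + U *)
    (q - p) \in U -> (W <= U)%VS -> \dim W = (\dim U).-1 ->
    v \in U -> v \notin W ->
    yao W q Pm c -> yao W q Pp c ->
    yao U p ([set B | exists2 A, Pm A & B = add_nray A v]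
             `|` [set B | exists2 A, Pp A & B = add_pray A v]) c.

Definition yao_partition {R : realType} {n : nat}
  (P : set (set 'rV[R]_n)) (c : 'rV[R]_n) : Prop := yao fullv 0 P c.

Definition affine_form {R : realType} {n : nat} (l : 'rV[R]_n -> R) : Prop :=
  exists (a : 'cV[R]_n) (b : R), forall x, l x = (x *m a) 0 0 + b.

(* Passing from F = q + W to E = p + U, each cell A
   of the sub-partitions becomes A + R_+ v or A + R_- v, along which l varies
   at the rate s = l v - l 0. If s >= 0, a nonnegative cell of P_+ stays
   nonnegative after adding R_+ v; if s <= 0, use P_- instead. A cell A + R_+ v
   that is positive away from c contains c + v and so forces s > 0, while a
   cell A + R_- v contains c - v and forces s < 0; two such cells thus come
   from the same sub-partition, where uniqueness holds by induction. *)
From HB Require Import structures.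
From mathcomp Require Import all_boot all_order all_algebra.
From mathcomp Require Import boolp classical_sets reals.
From mathcomp Require Import ring.
Import Order.TTheory GRing.Theory Num.Theory.
Local Open Scope ring_scope.
Local Open Scope classical_set_scope.
Set Implicit Arguments.

Lemma yao_center (R : realType) (n : nat) (U : {vspace 'rV[R]_n}) p P c :
  yao U p P c -> forall A, P A -> A c.
Proof.
elim=> [{}U {}p _ | {}U W {}p q v {}c Pm Pp _ _ _ _ _ _ _ IHm _ IHp] A.
  by move=> ->.
by case=> -[A' PA' ->]; exists c, 0; rewrite scale0r addr0;
  [split; [exact: IHm|] | split; [exact: IHp|]].
Qed.

Lemma sub_add_pray (R : realType) (n : nat) (A : set 'rV[R]_n) v :
  A `<=` add_pray A v.
Proof. by move=> x Ax; exists x, 0; rewrite scale0r addr0. Qed.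

Lemma sub_add_nray (R : realType) (n : nat) (A : set 'rV[R]_n) v :
  A `<=` add_nray A v.
Proof. by move=> x Ax; exists x, 0; rewrite scale0r addr0. Qed.

Lemma notin_vspace_neq0 (K : fieldType) (vT : vectType K)
    {W : {vspace vT}} {v : vT} :
  v \notin W -> v != 0.
Proof. by apply: contraNneq => ->; rewrite mem0v. Qed.

Section AffineFormOnCells.

Variables (R : realType) (n : nat) (l : 'rV[R]_n -> R).
Hypothesis l_affine : affine_form l.

Definition nonneg_on (A : set 'rV[R]_n) := forall x, A x -> 0 <= l x.

Definition pos_on_punctured (c : 'rV[R]_n) (A : set 'rV[R]_n) :=
  forall x, A x -> x <> c -> 0 < l x.

Lemma affine_form_ray x t v : l (x + t *: v) = l x + t * (l v - l 0).
Proof.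
case: l_affine => a [b l_def]; rewrite !l_def mulmxDl -scalemxAl mul0mx !mxE.
by rewrite mulrBr; ring.
Qed.

Lemma nonneg_on_add_pray A v :
  nonneg_on A -> 0 <= l v - l 0 -> nonneg_on (add_pray A v).
Proof.
move=> A_ge0 s_ge0 _ [a [t [Aa [t_ge0 ->]]]]; rewrite affine_form_ray.
by rewrite addr_ge0 ?mulr_ge0 ?A_ge0.
Qed.

Lemma nonneg_on_add_nray A v :
  nonneg_on A -> l v - l 0 <= 0 -> nonneg_on (add_nray A v).
Proof.
move=> A_ge0 s_le0 _ [a [t [Aa [t_le0 ->]]]]; rewrite affine_form_ray.
by rewrite addr_ge0 ?mulr_le0 ?A_ge0.
Qed.

Lemma pos_on_punctured_add_pray c A v :
  A c -> v != 0 -> l c = 0 -> pos_on_punctured c (add_pray A v) ->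
  0 < l v - l 0.
Proof.
move=> Ac v_neq0 lc0 A_gt0.
have := A_gt0 (c + 1 *: v); rewrite affine_form_ray lc0 add0r mul1r; apply.
  by exists c, 1; rewrite ler01.
by move/eqP; rewrite addrC -subr_eq0 addrK scale1r (negbTE v_neq0).
Qed.

Lemma pos_on_punctured_add_nray c A v :
  A c -> v != 0 -> l c = 0 -> pos_on_punctured c (add_nray A v) ->
  l v - l 0 < 0.
Proof.
move=> Ac v_neq0 lc0 A_gt0.
have := A_gt0 (c + (-1) *: v).
rewrite affine_form_ray lc0 add0r mulN1r oppr_gt0.
apply; first by exists c, (-1); rewrite lerN10.
by move/eqP; rewrite addrC -subr_eq0 addrK scaleN1r oppr_eq0 (negbTE v_neq0).
Qed.

Lemma pos_on_punctured_sub c A B :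
  A `<=` B -> pos_on_punctured c B -> pos_on_punctured c A.
Proof. by move=> AB B_gt0 x /AB; apply: B_gt0. Qed.

Lemma yao_nonneg_cell U p P c :
  yao U p P c -> l c = 0 -> exists A, P A /\ nonneg_on A.
Proof.
elim=> [{}U {}p _ | {}U W {}p q v {}c Pm Pp _ _ _ _ _ _ _ IHm _ IHp] lc0.
  by exists [set p]; split=> // x ->; rewrite lc0.
have [s_ge0 | s_lt0] := leP 0 (l v - l 0).
  have [A [PpA A_ge0]] := IHp lc0.
  by exists (add_pray A v); split; [right; exists A | exact: nonneg_on_add_pray].
have [A [PmA A_ge0]] := IHm lc0.
by exists (add_nray A v); split; [left; exists A | exact/nonneg_on_add_nray/ltW].
Qed.

Lemma yao_pos_on_punctured_unique U p P c :
  yao U p P c -> l c = 0 -> forall A B, P A -> P B ->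
  pos_on_punctured c A -> pos_on_punctured c B -> A = B.
Proof.
elim=> [{}U {}p _ | {}U W {}p q v {}c Pm Pp _ _ _ _ _ vW Ym IHm Yp IHp] lc0.
  by move=> A B -> ->.
have v_neq0 := notin_vspace_neq0 vW.
have sgn_p A : Pp A -> pos_on_punctured c (add_pray A v) -> 0 < l v - l 0.
  by move=> PpA; apply: pos_on_punctured_add_pray => //;
    exact: yao_center Yp _ PpA.
have sgn_m A : Pm A -> pos_on_punctured c (add_nray A v) -> l v - l 0 < 0.
  by move=> PmA; apply: pos_on_punctured_add_nray => //;
    exact: yao_center Ym _ PmA.
move=> _ _ [[A PA ->]|[A PA ->]] [[B PB ->]|[B PB ->]] A_gt0 B_gt0.
- congr add_nray; apply: IHm => //;
    exact: pos_on_punctured_sub (@sub_add_nray _ _ _ v) _.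
- by have := lt_trans (sgn_m _ PA A_gt0) (sgn_p _ PB B_gt0); rewrite ltxx.
- by have := lt_trans (sgn_m _ PB B_gt0) (sgn_p _ PA A_gt0); rewrite ltxx.
- congr add_pray; apply: IHp => //;
    exact: pos_on_punctured_sub (@sub_add_pray _ _ _ v) _.
Qed.

End AffineFormOnCells.

Theorem mainTheorem1 (R : realType) (n : nat) (P : set (set 'rV[R]_n))
    (c : 'rV[R]_n) (l : 'rV[R]_n -> R) :
  yao_partition P c -> affine_form l -> l c = 0 ->
  (exists A, P A /\ forall x, A x -> 0 <= l x) /\
  (forall A B, P A -> P B ->
     (forall x, A x -> x <> c -> 0 < l x) ->
     (forall x, B x -> x <> c -> 0 < l x) -> A = B).
Proof.
move=> Y l_affine lc0; split.
  exact: yao_nonneg_cell Y lc0.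
exact: yao_pos_on_punctured_unique Y lc0.
Qed.
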